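(* Let $f \colon \mathbb{R}^n \to \mathbb{R}$ be the Euclidean norm, $f(x) = \|x\|$. Then every BFGS sequence $(x_k)_{k \ge 0}$ for $f$ converges to $0$.
   Context: A sequence $(x_k)$ is a BFGS sequence for $f$ if $f$ is differentiable at each $x_k$ with $\nabla f(x_k) \neq 0$, and there exist parameters $0<\mu<\nu<1$ and a positive definite $n\times n$ matrix $H_0$ such that, with $s_k = x_{k+1}-x_k$, $y_k = \nabla f(x_{k+1}) - \nabla f(x_k)$, $V_k = I - \frac{s_k y_k^T}{s_k^T y_k}$ and $H_{k+1} = V_k H_k V_k^T + \frac{s_k s_k^T}{s_k^T y_k}$, one has for all $k=0,1,2,\dots$: $H_k \nabla f(x_k) \in -\mathbb{R}_+ s_k$, $f(x_{k+1}) \le f(x_k) + \mu \nabla f(x_k)^T s_k$, and $\nabla f(x_{k+1})^T s_k \ge \nu \nabla f(x_k)^T s_k$. *)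

From HB Require Import structures.
From mathcomp Require Import all_boot all_order all_algebra.
From mathcomp Require Import all_classical all_reals all_analysis.
Set Implicit Arguments. Unset Strict Implicit. Unset Printing Implicit Defensive.
Import Order.TTheory GRing.Theory Num.Theory.
Import numFieldNormedType.Exports.
Local Open Scope ring_scope.

Section BFGS.
Variables (R : realType) (n : nat).

Definition dotv (u v : 'cV[R]_n) : R := (u^T *m v) 0 0.

Definition euclid_norm (x : 'cV[R]_n) : R := Num.sqrt (\sum_i (x i 0) ^+ 2).

Definition is_gradient (f : 'cV[R]_n -> R) (x g : 'cV[R]_n) : Prop :=
  differentiable f x /\ forall v : 'cV[R]_n, 'd f x v = dotv g v.

Definition posdef (H : 'M[R]_n) : Prop :=
  H^T = H /\ forall v : 'cV[R]_n, v != 0 -> 0 < dotv v (H *m v).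

Definition BFGS_update (H : 'M[R]_n) (s y : 'cV[R]_n) : 'M[R]_n :=
  let V := 1%:M - (dotv s y)^-1 *: (s *m y^T) in
  V *m H *m V^T + (dotv s y)^-1 *: (s *m s^T).

Fixpoint BFGS_H (H0 : 'M[R]_n) (s y : nat -> 'cV[R]_n) (k : nat) : 'M[R]_n :=
  match k with
  | 0 => H0
  | k'.+1 => BFGS_update (BFGS_H H0 s y k') (s k') (y k')
  end.

Definition BFGS_sequence (f : 'cV[R]_n -> R) (x : nat -> 'cV[R]_n) : Prop :=
  exists (g : nat -> 'cV[R]_n) (mu nu : R) (H0 : 'M[R]_n),
    (forall k, is_gradient f (x k) (g k) /\ g k != 0) /\
    0 < mu /\ mu < nu /\ nu < 1 /\ posdef H0 /\
    let s := fun k => x k.+1 - x k in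
    let y := fun k => g k.+1 - g k in
    forall k,
      (exists t : R, 0 <= t /\ BFGS_H H0 s y k *m g k = - (t *: s k)) /\
      f (x k.+1) <= f (x k) + mu * dotv (g k) (s k) /\
      dotv (g k.+1) (s k) >= nu * dotv (g k) (s k).

End BFGS.

From HB Require Import structures.
From mathcomp Require Import all_boot all_order all_algebra.
From mathcomp Require Import all_classical all_reals all_analysis.
From mathcomp Require Import perm ring lra.
Import Order.TTheory GRing.Theory Num.Theory.
Import numFieldNormedType.Exports.
Local Open Scope classical_set_scope.
Local Open Scope ring_scope.
Set Implicit Arguments. Unset Strict Implicit. Unset Printing Implicit Defensive.

(* The gradient of the norm at x_k is the unit vector g_k = x_k / |x_k|, so the Armijo
   condition makes |x_k| nonincreasing and bounds the total decrease sum_k d_k, where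
   d_k = - g_k^T s_k.  Suppose |x_k| >= e > 0 for all k and follow B_k = H_k^-1, which
   obeys the direct BFGS update.  As B_k s_k = - g_k / t_k, the trace of B_k changes by
   - 1 / (t_k d_k) + |y_k|^2 / s_k^T y_k, where the last term equals
   2 / (|x_k| + |x_(k+1)|) <= 1 / e; and the determinant is multiplied by
   t_k s_k^T y_k / d_k >= (1 - nu) t_k.  Since t_k = 1 / ((1 / (t_k d_k)) d_k), AM-GM
   on the two bounded sums makes |det B_k| grow like (c k)^k, whereas
   |det B_k| <= n! (tr B_k)^n = O(k^n); so |x_k| drops below every e > 0. *)

Section Dotv.
Variables (R : realType) (n : nat).
Implicit Types (u v w : 'cV[R]_n) (a : R).
Local Notation dot := (@dotv R n).

Lemma dotvE u v : dot u v = \sum_i u i 0 * v i 0.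
Proof. by rewrite /dotv !mxE; apply: eq_bigr => i _; rewrite mxE. Qed.

Lemma dotvC u v : dot u v = dot v u.
Proof. by rewrite !dotvE; apply: eq_bigr => i _; rewrite mulrC. Qed.

Lemma dotvDl u v w : dot (u + v) w = dot u w + dot v w.
Proof. by rewrite !dotvE -big_split; apply: eq_bigr => i _; rewrite mxE mulrDl. Qed.

Lemma dotvDr u v w : dot w (u + v) = dot w u + dot w v.
Proof. by rewrite dotvC dotvDl !(dotvC w). Qed.

Lemma dotvZl a u v : dot (a *: u) v = a * dot u v.
Proof. by rewrite !dotvE mulr_sumr; apply: eq_bigr => i _; rewrite mxE mulrA. Qed.

Lemma dotvZr a u v : dot v (a *: u) = a * dot v u.
Proof. by rewrite dotvC dotvZl dotvC. Qed.

Lemma dotvNl u v : dot (- u) v = - dot u v.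
Proof. by rewrite -scaleN1r dotvZl mulN1r. Qed.

Lemma dotvNr u v : dot v (- u) = - dot v u.
Proof. by rewrite dotvC dotvNl dotvC. Qed.

Lemma dotvBl u v w : dot (u - v) w = dot u w - dot v w.
Proof. by rewrite dotvDl dotvNl. Qed.

Lemma dotvBr u v w : dot w (u - v) = dot w u - dot w v.
Proof. by rewrite dotvDr dotvNr. Qed.

Lemma dotv0r u : dot u 0 = 0.
Proof. by rewrite -(scale0r 0) dotvZr mul0r. Qed.

Lemma dotvMr u (A : 'M[R]_n) v : dot u (A *m v) = dot (A^T *m u) v.
Proof. by rewrite /dotv trmx_mul trmxK mulmxA. Qed.

Lemma dotvvE v : dot v v = \sum_i v i 0 ^+ 2.
Proof. by rewrite dotvE; apply: eq_bigr => i _; rewrite expr2. Qed.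

Lemma dotvv_ge0 v : 0 <= dot v v.
Proof. by rewrite dotvvE; apply: sumr_ge0 => i _; rewrite sqr_ge0. Qed.

Lemma dotvv_eq0 v : (dot v v == 0) = (v == 0).
Proof.
apply/idP/eqP => [|->]; last by rewrite dotv0r.
rewrite dotvvE psumr_eq0 => [/allP v0|i _]; last exact: sqr_ge0.
apply/matrixP => i j; rewrite (ord1 j) mxE.
by apply/eqP; rewrite -sqrf_eq0; exact: v0 (mem_index_enum i).
Qed.

Lemma dotvv_gt0 v : (0 < dot v v) = (v != 0).
Proof. by rewrite lt_def dotvv_eq0 dotvv_ge0 andbT. Qed.

Lemma outer_mulmx u w v : u *m w^T *m v = dot w v *: u.
Proof. by rewrite -mulmxA [w^T *m v]mx11_scalar mul_mx_scalar. Qed.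

Lemma mxtrace_outer u w : \tr (u *m w^T) = dot w u.
Proof. by rewrite mxtrace_mulC trace_mx11. Qed.

Lemma dotv_delta i v : dot (delta_mx i 0) v = v i 0.
Proof. by rewrite /dotv trmx_delta -rowE mxE. Qed.

Lemma dotv_delta_mulmx (B : 'M[R]_n) i j :
  dot (delta_mx i 0) (B *m delta_mx j 0) = B i j.
Proof. by rewrite dotv_delta -colE mxE. Qed.

Lemma dotv_unit_sub u v a b :
  dot u u = 1 -> dot v v = 1 ->
  dot (v - u) (v - u) * (a + b) = 2 * dot (b *: v - a *: u) (v - u).
Proof.
move=> uu vv; rewrite !(dotvBl, dotvBr, dotvZl) uu vv (dotvC v u).
by ring.
Qed.

End Dotv.

Section EuclidNorm.
Variables (R : realType) (n : nat).
Implicit Types v : 'cV[R]_n.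
Local Notation N := (@euclid_norm R n).

Lemma euclid_normE v : N v = Num.sqrt (dotv v v).
Proof. by rewrite /euclid_norm dotvvE. Qed.

Lemma euclid_norm_ge0 v : 0 <= N v.
Proof. by rewrite euclid_normE sqrtr_ge0. Qed.

Lemma euclid_norm_gt0 v : (0 < N v) = (v != 0).
Proof. by rewrite euclid_normE sqrtr_gt0 dotvv_gt0. Qed.

Lemma sqr_euclid_norm v : N v ^+ 2 = dotv v v.
Proof. by rewrite euclid_normE sqr_sqrtr // dotvv_ge0. Qed.

Lemma euclid_normN v : N (- v) = N v.
Proof. by rewrite !euclid_normE dotvNl dotvNr opprK. Qed.

Lemma mx_norm_le_euclid_norm v : `|v| <= N v.
Proof.
rewrite [`|v|]mx_normrE; apply: bigmax_le => [|[i j] _ /=]; first exact: euclid_norm_ge0.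
rewrite (ord1 j) euclid_normE -sqrtr_sqr ler_sqrt ?dotvv_ge0 // dotvvE.
by rewrite (bigD1 i) //= lerDl; apply: sumr_ge0 => k _; rewrite sqr_ge0.
Qed.

End EuclidNorm.

Section Gradient.
Variables (R : realType) (n : nat).
Implicit Types (f : 'cV[R]_n -> R) (x g v : 'cV[R]_n).
Local Notation N := (@euclid_norm R n).

Lemma gradient_derive f x g v : is_gradient f x g -> 'D_v f x = dotv g v.
Proof. by case=> df dfE; rewrite deriveE. Qed.

Lemma gradient_even_at0 f g : (forall z, f (- z) = f z) -> is_gradient f 0 g -> g = 0.
Proof.
move=> f_even [df dfE]; apply/eqP; rewrite -dotvv_eq0 -dfE.
have : 'D_(- g) f 0 = 'D_g f 0.
  rewrite /derive; suff -> : (fun h : R => h^-1 *: ((f \o shift 0) (h *: - g) - f 0)) =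
    (fun h : R => h^-1 *: ((f \o shift 0) (h *: g) - f 0)) by [].
  by apply/funext => h /=; rewrite !addr0 scalerN f_even.
by rewrite !deriveE // linearN => /eqP dN; apply/eqP; lra.
Qed.

Lemma derive_dotvv x v : 'D_v (fun z => dotv z z) x = 2 * dotv x v.
Proof.
apply: cvg_lim => //=.
have : (fun h : R => 2 * dotv x v + h * dotv v v) @ 0^' --> 2 * dotv x v + 0 * dotv v v.
  apply: cvgD; first exact: cvg_cst.
  by apply: cvgMl; apply: cvg_within_filter; exact: cvg_id.
rewrite mul0r addr0; apply: cvg_trans; apply: near_eq_cvg; near=> h.
have h_neq0 : h != 0 by near: h; exact: nbhs_dnbhs_neq.
rewrite /= !dotvDl !dotvDr !dotvZl !dotvZr (dotvC v x).
by rewrite -[_ *: _]/(_ * _); field.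
Unshelve. all: by end_near.
Qed.

Lemma euclid_norm_gradient_dotv x g v : is_gradient N x g -> N x * dotv g v = dotv x v.
Proof.
move=> gr; have dN : derivable N x v by apply: diff_derivable; case: gr.
have dNN : 'D_v (N * N) x = 2 * dotv x v.
  rewrite (_ : N * N = fun z => dotv z z); first exact: derive_dotvv.
  by apply/funext => z; rewrite -sqr_euclid_norm expr2.
by move: dNN; rewrite deriveM // (gradient_derive v gr) -[_ *: _]/(_ * _); lra.
Qed.

Lemma euclid_norm_gradient x g : is_gradient N x g -> g != 0 ->
  x != 0 /\ g = (N x)^-1 *: x.
Proof.
move=> gr g_neq0; have x_neq0 : x != 0.
  apply: contraNneq g_neq0 => x0; move: gr.
  by rewrite x0 => /(gradient_even_at0 (@euclid_normN R n)) ->.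
split => //; apply/eqP; rewrite -subr_eq0 -dotvv_eq0.
have gE v : dotv g v = (N x)^-1 * dotv x v.
  by rewrite -(euclid_norm_gradient_dotv v gr) mulKf // gt_eqF // euclid_norm_gt0.
by rewrite !(dotvBl, dotvBr, dotvZl, dotvZr) !gE (dotvC x) gE !subrr.
Qed.

End Gradient.

Section Determinant.
Variable R : comRingType.

Lemma det_1D_mulmxC m p (U : 'M[R]_(m, p)) (W : 'M[R]_(p, m)) :
  \det (1%:M + U *m W) = \det (1%:M + W *m U).
Proof.
pose A := block_mx 1%:M (- U) W 1%:M.
pose L := block_mx 1%:M 0 (- W) 1%:M.
have LA : L *m A = block_mx 1%:M (- U) 0 (1%:M + W *m U).
  by rewrite mulmx_block !(mul1mx, mul0mx, mulmx1, mulNmx, mulmxN, addr0, opprK, addNr) addrC.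
have AL : A *m L = block_mx (1%:M + U *m W) (- U) 0 1%:M.
  by rewrite mulmx_block !(mulmx1, mulmx0, addr0, add0r, mulmxN, mulNmx, mul1mx, opprK, subrr).
have := congr1 determinant LA; have := congr1 determinant AL.
by rewrite !det_mulmx !det_ublock det_lblock !det1 !(mul1r, mulr1) => <-.
Qed.

Lemma det_mx22 (A : 'M[R]_2) : \det A = A 0 0 * A 1 1 - A 0 1 * A 1 0.
Proof.
rewrite (expand_det_row _ 0) !big_ord_recl big_ord0 addr0 /cofactor !det_mx11 !mxE /=.
by rewrite !expr0 !mul1r /bump /= expr1 mulN1r mulrN; congr (_ * A _ _ - A _ _ * A _ _); apply/val_inj.
Qed.

Lemma det_block_mx11 (P Q S T : 'M[R]_1) :
  \det (block_mx P Q S T : 'M[R]_(1 + 1)) = P 0 0 * T 0 0 - Q 0 0 * S 0 0.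
Proof.
rewrite det_mx22.
have -> : (0 : 'I_2) = lshift 1 (0 : 'I_1) by apply/val_inj.
have -> : (1 : 'I_2) = rshift 1 (0 : 'I_1) by apply/val_inj.
move: (block_mxEul P Q S T 0 0) (block_mxEur P Q S T 0 0).
by move: (block_mxEdl P Q S T 0 0) (block_mxEdr P Q S T 0 0) => <- <- <- <-.
Qed.

End Determinant.

Section BFGSAlgebra.
Variables (R : realType) (n : nat).
Implicit Types (H B : 'M[R]_n) (s y u v : 'cV[R]_n).
Local Notation dot := (@dotv R n).

Definition BFGS_hessian_update B s y : 'M[R]_n :=
  B - (dot s (B *m s))^-1 *: (B *m s *m (B *m s)^T) + (dot s y)^-1 *: (y *m y^T).

Lemma BFGS_update_mulmx H s y v :
  let w := v - ((dot s y)^-1 * dot s v) *: y in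
  BFGS_update H s y *m v =
    H *m w - ((dot s y)^-1 * dot y (H *m w)) *: s + ((dot s y)^-1 * dot s v) *: s.
Proof.
move=> w; rewrite /BFGS_update; set rho := (dot s y)^-1.
have -> : (1%:M - rho *: (s *m y^T))^T = 1%:M - rho *: (y *m s^T).
  by rewrite linearB /= linearZ /= trmx1 trmx_mul trmxK.
rewrite (mulmxDl _ _ v) -scalemxAl outer_mulmx scalerA -!mulmxA.
have -> : (1%:M - rho *: (y *m s^T)) *m v = w.
  by rewrite mulmxBl mul1mx -scalemxAl outer_mulmx scalerA.
by rewrite mulmxBl mul1mx -scalemxAl outer_mulmx scalerA.
Qed.

Lemma trmx_BFGS_update H s y : H^T = H -> (BFGS_update H s y)^T = BFGS_update H s y.
Proof.
move=> HT; rewrite /BFGS_update; set V := 1%:M - _.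
by rewrite linearD /= linearZ /= trmx_mul trmxK !trmx_mul trmxK HT mulmxA.
Qed.

Lemma dotv_BFGS_update H s y v :
  let w := v - ((dot s y)^-1 * dot s v) *: y in
  dot v (BFGS_update H s y *m v) = dot w (H *m w) + (dot s y)^-1 * dot s v ^+ 2.
Proof.
move=> w; rewrite BFGS_update_mulmx -/w !dotvDr !dotvNr !dotvZr.
have -> : dot w (H *m w) = dot v (H *m w) - (dot s y)^-1 * dot s v * dot y (H *m w).
  by rewrite /w dotvBl dotvZl.
by rewrite (dotvC v s); ring.
Qed.

Lemma posdef_ge0 H v : posdef H -> 0 <= dot v (H *m v).
Proof.
case=> _ Hpos; have [->|v_neq0] := eqVneq v 0; first by rewrite mulmx0 dotv0r.
exact/ltW/Hpos.
Qed.

Lemma posdef_BFGS_update H s y :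
  posdef H -> 0 < dot s y -> posdef (BFGS_update H s y).
Proof.
move=> Hpd sy_gt0; split; first by apply: trmx_BFGS_update; case: Hpd.
move=> v v_neq0; rewrite dotv_BFGS_update.
have [sv0|sv_neq0] := eqVneq (dot s v) 0.
  by rewrite sv0 mulr0 scale0r subr0 expr0n mulr0 addr0; case: Hpd => _; apply.
apply: ltr_wpDl; first exact: posdef_ge0.
by rewrite mulr_gt0 ?invr_gt0 // exprn_even_gt0.
Qed.

Lemma posdef_unitmx H : posdef H -> H \in unitmx.
Proof.
case=> HT Hpos; rewrite unitmxE unitfE; apply/negP => /det0P [v v_neq0 vH].
have Hv : H *m v^T = 0 by rewrite -HT -trmx_mul vH trmx0.
by have := Hpos v^T; rewrite trmx_eq0 v_neq0 Hv dotv0r ltxx => /(_ isT).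
Qed.

Lemma posdef_invmx H : posdef H -> posdef (invmx H).
Proof.
move=> Hpd; have Hu := posdef_unitmx Hpd; have [HT Hpos] := Hpd.
split; first by rewrite trmx_inv HT.
move=> v v_neq0; set w := invmx H *m v.
have -> : v = H *m w by rewrite /w mulKVmx.
rewrite dotvC; apply: Hpos; apply: contra_neq v_neq0 => w0.
by rewrite -(mulKVmx Hu v) -/w w0 mulmx0.
Qed.

Lemma posdef_descent H (g s : 'cV[R]_n) (t : R) :
  posdef H -> H *m g = - (t *: s) -> g != 0 -> 0 <= t -> 0 < t /\ dot g s < 0.
Proof.
move=> [_ Hpos] Hg g_neq0 t_ge0; have := Hpos g g_neq0.
rewrite Hg dotvNr dotvZr oppr_gt0 => tgs_lt0.
have t_gt0 : 0 < t by rewrite lt_def t_ge0 andbT; apply: contraTneq tgs_lt0 => ->; rewrite mul0r ltxx.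
by split => //; rewrite -(pmulr_rlt0 _ t_gt0).
Qed.

Lemma mulmx_eq1 (A : 'M[R]_n) : (forall u, A *m u = u) -> A = 1%:M.
Proof.
move=> Au; apply/matrixP => i j.
have := congr1 (fun w : 'cV[R]_n => w i 0) (Au (delta_mx j 0)).
by rewrite -colE !mxE /= eqxx andbT => ->.
Qed.

Lemma mulmx_BFGS_update_hessian H s y :
  H^T = H -> H \in unitmx -> dot s y != 0 -> dot s (invmx H *m s) != 0 ->
  BFGS_update H s y *m BFGS_hessian_update (invmx H) s y = 1%:M.
Proof.
move=> HT Hu sy_neq0; set B := invmx H => sBs_neq0.
have BT : B^T = B by rewrite trmx_inv HT.
apply: mulmx_eq1 => u; set a := dot (B *m s) u; rewrite -mulmxA.
have -> : BFGS_hessian_update B s y *m u =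
    B *m u - (a / dot s (B *m s)) *: (B *m s) + ((dot s y)^-1 * dot y u) *: y.
  by rewrite /BFGS_hessian_update mulmxDl mulmxBl -!scalemxAl !outer_mulmx !scalerA mulrC.
set v := B *m u - _ + _; have sv : dot s v = dot y u.
  rewrite /v dotvDr dotvBr !dotvZr dotvMr BT -/a.
  by field; rewrite sy_neq0 sBs_neq0.
rewrite (BFGS_update_mulmx H s y v) sv addrK mulmxBr mulmxA mulmxV // mul1mx -scalemxAr mulKVmx //.
rewrite dotvBr dotvZr dotvMr BT ?mulmx1 (dotvC y s) (dotvC (B *m s) s).
rewrite -!addrA -!scaleNr -!scalerDl [X in X *: s](_ : _ = 0) ?scale0r ?addr0 //.
by rewrite -![_ *: _]/(_ * _); field; rewrite sy_neq0 sBs_neq0.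
Qed.

Lemma invmx_BFGS_update H s y :
  H^T = H -> H \in unitmx -> dot s y != 0 -> dot s (invmx H *m s) != 0 ->
  invmx (BFGS_update H s y) = BFGS_hessian_update (invmx H) s y.
Proof.
move=> HT Hu sy_neq0 sBs_neq0.
have HB := mulmx_BFGS_update_hessian HT Hu sy_neq0 sBs_neq0.
have [H'u _] := mulmx1_unit HB.
by rewrite -[RHS]mul1mx -(mulVmx H'u) -mulmxA HB mulmx1.
Qed.

Lemma mxtrace_BFGS_hessian_update B s y :
  \tr (BFGS_hessian_update B s y) =
    \tr B - dot (B *m s) (B *m s) / dot s (B *m s) + dot y y / dot s y.
Proof.
by rewrite /BFGS_hessian_update mxtraceD raddfB /= !mxtraceZ !mxtrace_outer !(mulrC (_^-1)).
Qed.

Lemma det_BFGS_hessian_update B s y :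
  B^T = B -> B \in unitmx -> dot s y != 0 -> dot s (B *m s) != 0 ->
  \det (BFGS_hessian_update B s y) = \det B * (dot s y / dot s (B *m s)).
Proof.
move=> BT Bu sy_neq0 sBs_neq0.
(* B is corrected by a rank-two term U W, so Sylvester's identity leaves a 2 x 2 determinant. *)
set sigma := dot s (B *m s); set rho := (dot s y)^-1.
pose U := row_mx s (invmx B *m y).
pose W := col_mx (- sigma^-1 *: (B *m s)^T) (rho *: y^T).
have -> : BFGS_hessian_update B s y = B *m (1%:M + U *m W).
  rewrite mulmxDr mulmx1 mul_row_col mulmxDr -!scalemxAr !mulmxA mulmxV // mul1mx.
  by rewrite /BFGS_hessian_update -/sigma -/rho scaleNr addrA.
rewrite det_mulmx det_1D_mulmxC; congr (_ * _).
rewrite mul_col_row (scalar_mx_block 1 1 1) add_block_mx det_block_mx11.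
have entry (a : R) (u v : 'cV[R]_n) : (a *: u^T *m v) 0 0 = a * dot u v.
  by rewrite -scalemxAl mxE.
rewrite !add0r !(entry, mxE) /= (dotvC (B *m s) (invmx B *m y)) (dotvMr (invmx B *m y)) BT.
rewrite mulmxA mulmxV // mul1mx (dotvC (B *m s)) (dotvC y s).
by rewrite /sigma /rho; field; rewrite sy_neq0 sBs_neq0.
Qed.

Lemma posdef_mxtrace_ge0 B : posdef B -> 0 <= \tr B.
Proof.
move=> Bpd; apply: sumr_ge0 => i _; rewrite -dotv_delta_mulmx.
exact: posdef_ge0.
Qed.

Lemma posdef_entry_le_mxtrace B i j : posdef B -> `|B i j| <= \tr B.
Proof.
move=> Bpd; have [BT _] := Bpd.
have diag_ge0 k : 0 <= B k k by rewrite -dotv_delta_mulmx; exact: posdef_ge0.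
have diag_le k : B k k <= \tr B.
  by rewrite /mxtrace (bigD1 k) //= lerDl; apply: sumr_ge0.
have Bsym : B j i = B i j by rewrite -{1}BT mxE.
have := posdef_ge0 (delta_mx i 0 + delta_mx j 0) Bpd.
have := posdef_ge0 (delta_mx i 0 - delta_mx j 0) Bpd.
rewrite mulmxDr mulmxBr !(dotvDl, dotvDr, dotvBl, dotvBr, dotvNl, dotvNr) !dotv_delta_mulmx Bsym.
have := diag_le i; have := diag_le j; have := diag_ge0 i; have := diag_ge0 j.
by rewrite ler_norml => *; apply/andP; split; lra.
Qed.

Lemma posdef_det_le_mxtrace B : posdef B -> `|\det B| <= n`!%:R * \tr B ^+ n.
Proof.
move=> Bpd; apply: le_trans (ler_norm_sum _ _ _) _.
rewrite mulr_natl -card_Sn -sumr_const; apply: ler_sum => p _.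
rewrite normrM normr_sign mul1r normr_prod -[X in _ <= _ ^+ X](card_ord n) -prodr_const.
by apply: ler_prod => i _; rewrite normr_ge0 posdef_entry_le_mxtrace.
Qed.

End BFGSAlgebra.

Section Growth.
Variable R : realType.

Lemma AGM_prodr_inv (c d : nat -> R) (C D : R) (k : nat) :
  (forall j, 0 < c j) -> (forall j, 0 < d j) ->
  \sum_(j < k) c j <= C -> \sum_(j < k) d j <= D ->
  (k%:R ^+ 2 / (C * D)) ^+ k <= \prod_(j < k) (c j * d j)^-1.
Proof.
case: k => [|k] c_gt0 d_gt0 sumc sumd; first by rewrite expr0 big_ord0.
have k_gt0 : 0 < k.+1%:R :> R by rewrite ltr0n.
have sum_gt0 (e : nat -> R) : (forall j, 0 < e j) -> 0 < \sum_(j < k.+1) e j.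
  by move=> e_gt0; rewrite big_ord_recr /= ltr_wpDl // sumr_ge0 // => j _; exact: ltW.
have AGM (e : nat -> R) E : (forall j, 0 < e j) -> \sum_(j < k.+1) e j <= E ->
    \prod_(j < k.+1) e j <= (E / k.+1%:R) ^+ k.+1.
  move=> e_gt0 sume; have [+ _] := @leif_AGM R 'I_k.+1 predT e (fun j _ => ltW (e_gt0 j)).
  rewrite cardT size_enum_ord => /le_trans; apply; apply: lerXn2r; rewrite ?nnegrE.
  - by rewrite divr_ge0 // ltW // sum_gt0.
  - by rewrite divr_ge0 // ltW // (lt_le_trans (sum_gt0 _ e_gt0)).
  - by rewrite ler_pM2r ?invr_gt0.
have C_gt0 := lt_le_trans (sum_gt0 _ c_gt0) sumc.
have D_gt0 := lt_le_trans (sum_gt0 _ d_gt0) sumd.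
have -> : (k.+1%:R ^+ 2 / (C * D)) ^+ k.+1 = ((C / k.+1%:R * (D / k.+1%:R)) ^+ k.+1)^-1.
  by rewrite -exprVn; congr (_ ^+ _); field; rewrite !gt_eqF.
rewrite prodfV big_split /= lef_pV2 ?posrE ?exprn_gt0 ?mulr_gt0 ?divr_gt0 ?prodr_gt0 //.
by rewrite exprMn; apply: ler_pM; (try by apply: prodr_ge0 => j _; exact: ltW); exact: AGM.
Qed.

Lemma superexp_dominates_poly (a C : R) (m : nat) :
  0 < a -> \forall k \near \oo, C * k%:R ^+ m < (a * k%:R) ^+ k.
Proof.
move=> a_gt0.
have [N1 N1P] : exists N1 : nat, `|C| / a ^+ m < N1%:R.
  by eexists; apply: archi_boundP; rewrite divr_ge0 // exprn_ge0 // ltW.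
have [N2 N2P] : exists N2 : nat, 2 / a < N2%:R.
  by eexists; apply: archi_boundP; rewrite divr_ge0 // ltW.
near=> k.
have kN1 : (m + N1 <= k)%N by near: k; exists (m + N1)%N.
have kN2 : (N2 <= k)%N by near: k; exists N2.
set z := a * k%:R.
have z_ge2 : 2 <= z.
  rewrite /z mulrC -ler_pdivrMr //; apply: ltW; apply: lt_le_trans N2P _.
  by rewrite ler_nat.
have zm_gt0 : 0 < z ^+ m by rewrite exprn_gt0 // (lt_le_trans _ z_ge2).
have zk : z ^+ k = z ^+ m * z ^+ (k - m).
  by rewrite -exprD subnKC // (leq_trans (leq_addr _ _) kN1).
have Ck : `|C| * k%:R ^+ m = `|C| / a ^+ m * z ^+ m.
  by rewrite /z exprMn; field; rewrite expf_neq0 // gt_eqF.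
have N1_le : (N1 <= k - m)%N by rewrite leq_subRL ?(leq_trans (leq_addr _ _) kN1) // addnC.
apply: le_lt_trans (ler_wpM2r (exprn_ge0 _ (ler0n _ k)) (ler_norm C)) _.
rewrite Ck zk mulrC ltr_pM2l //; apply: lt_le_trans N1P _.
apply: le_trans (_ : 2 ^+ (k - m) <= _); last by rewrite lerXn2r ?nnegrE ?(le_trans _ z_ge2).
by rewrite -natrX ler_nat (leq_trans N1_le) // ltnW // ltn_expl.
Unshelve. all: by end_near.
Qed.

End Growth.

Section BFGSEuclidNorm.
Variables (R : realType) (n : nat) (x g : nat -> 'cV[R]_n) (mu nu : R) (H0 : 'M[R]_n).
Variable t : nat -> R.
Local Notation N := (@euclid_norm R n).
Let s k := x k.+1 - x k.
Let y k := g k.+1 - g k.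
Let H := BFGS_H H0 s y.
Let B k := invmx (H k).
Let d k := - dotv (g k) (s k).

Hypothesis gradient_g : forall k, is_gradient N (x k) (g k).
Hypothesis g_neq0 : forall k, g k != 0.
Hypothesis mu_gt0 : 0 < mu.
Hypothesis nu_lt1 : nu < 1.
Hypothesis posdef_H0 : posdef H0.
Hypothesis t_ge0 : forall k, 0 <= t k.
Hypothesis search_direction : forall k, H k *m g k = - (t k *: s k).
Hypothesis armijo : forall k, N (x k.+1) <= N (x k) + mu * dotv (g k) (s k).
Hypothesis wolfe : forall k, nu * dotv (g k) (s k) <= dotv (g k.+1) (s k).

Lemma x_neq0 k : x k != 0.
Proof. by have [] := euclid_norm_gradient (gradient_g k) (g_neq0 k). Qed.

Lemma gE k : g k = (N (x k))^-1 *: x k.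
Proof. by have [] := euclid_norm_gradient (gradient_g k) (g_neq0 k). Qed.

Lemma xE k : x k = N (x k) *: g k.
Proof.
have Nx_gt0 : 0 < N (x k) by rewrite euclid_norm_gt0 x_neq0.
by rewrite gE scalerA mulfV ?gt_eqF ?scale1r.
Qed.

Lemma curvature k : (1 - nu) * d k <= dotv (s k) (y k).
Proof. by rewrite /d /y dotvBr !(dotvC (s k)); have := wolfe k; lra. Qed.

Lemma posdef_H k : posdef (H k).
Proof.
elim: k => [//|k IH]; apply: posdef_BFGS_update => //.
have [_ gs_lt0] := posdef_descent IH (search_direction k) (g_neq0 k) (t_ge0 k).
by apply: lt_le_trans (curvature k); rewrite mulr_gt0 ?subr_gt0 ?oppr_gt0.
Qed.

Lemma t_gt0 k : 0 < t k.
Proof. by have [] := posdef_descent (posdef_H k) (search_direction k) (g_neq0 k) (t_ge0 k). Qed.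

Lemma d_gt0 k : 0 < d k.
Proof.
have [] := posdef_descent (posdef_H k) (search_direction k) (g_neq0 k) (t_ge0 k).
by rewrite /d oppr_gt0.
Qed.

Lemma sy_gt0 k : 0 < dotv (s k) (y k).
Proof. by apply: lt_le_trans (curvature k); rewrite mulr_gt0 ?subr_gt0 ?d_gt0. Qed.

Lemma B_mulmx_s k : B k *m s k = - (t k)^-1 *: g k.
Proof.
have Hu := posdef_unitmx (posdef_H k).
rewrite -[in RHS](mulKmx Hu (g k)) search_direction mulmxN -scalemxAr scalerN scaleNr opprK.
by rewrite scalerA mulVf ?gt_eqF ?t_gt0 // scale1r.
Qed.

Lemma dotv_sBs k : dotv (s k) (B k *m s k) = d k / t k.
Proof. by rewrite B_mulmx_s dotvZr (dotvC (s k)) /d mulNr mulrC mulNr. Qed.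

Lemma BS k : B k.+1 = BFGS_hessian_update (B k) (s k) (y k).
Proof.
have [HT _] := posdef_H k.
apply: invmx_BFGS_update => //; first exact: posdef_unitmx (posdef_H k).
  by rewrite gt_eqF ?sy_gt0.
by rewrite -/(B k) dotv_sBs gt_eqF // divr_gt0 ?d_gt0 ?t_gt0.
Qed.

Lemma dotv_gg k : dotv (g k) (g k) = 1.
Proof.
have Nx_gt0 : 0 < N (x k) by rewrite euclid_norm_gt0 x_neq0.
by rewrite gE dotvZl dotvZr -sqr_euclid_norm; field; rewrite gt_eqF.
Qed.

Lemma mxtrace_BS k :
  \tr (B k.+1) = \tr (B k) - (t k * d k)^-1 + dotv (y k) (y k) / dotv (s k) (y k).
Proof.
rewrite BS mxtrace_BFGS_hessian_update dotv_sBs B_mulmx_s dotvZl dotvZr dotv_gg.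
by congr (_ - _ + _); field; rewrite !gt_eqF ?t_gt0 ?d_gt0.
Qed.

Lemma det_BS k : \det (B k.+1) = \det (B k) * (t k * dotv (s k) (y k) / d k).
Proof.
have [BT _] := posdef_invmx (posdef_H k).
rewrite BS det_BFGS_hessian_update // ?dotv_sBs.
- by congr (_ * _); field; rewrite !gt_eqF ?t_gt0 ?d_gt0.
- exact: posdef_unitmx (posdef_invmx (posdef_H k)).
- by rewrite gt_eqF ?sy_gt0.
- by rewrite gt_eqF // divr_gt0 ?d_gt0 ?t_gt0.
Qed.

Lemma dotv_yy k : dotv (y k) (y k) * (N (x k) + N (x k.+1)) = 2 * dotv (s k) (y k).
Proof. by rewrite /s {2}xE {2}(xE k.+1) dotv_unit_sub ?dotv_gg. Qed.

Lemma norm_xS_le k : N (x k.+1) <= N (x k) - mu * d k.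
Proof. by rewrite /d mulrN opprK. Qed.

Lemma mu_sum_d_le k : mu * \sum_(j < k) d j <= N (x 0) - N (x k).
Proof.
elim: k => [|k IH]; first by rewrite big_ord0 mulr0 subrr.
by rewrite big_ord_recr /= mulrDr; have := norm_xS_le k; lra.
Qed.

Lemma mxtrace_B k : \tr (B k) + \sum_(j < k) (t j * d j)^-1 =
  \tr (B 0) + \sum_(j < k) 2 / (N (x j) + N (x j.+1)).
Proof.
elim: k => [|k IH]; first by rewrite !big_ord0.
have r_gt0 j : 0 < N (x j) by rewrite euclid_norm_gt0 x_neq0.
have yy : dotv (y k) (y k) / dotv (s k) (y k) = 2 / (N (x k) + N (x k.+1)).
  have c_neq0 : N (x k) + N (x k.+1) != 0 by rewrite gt_eqF ?addr_gt0.
  by rewrite -(mulfK c_neq0 (dotv (y k) (y k))) dotv_yy mulrAC mulfK // gt_eqF ?sy_gt0.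
rewrite mxtrace_BS yy !big_ord_recr /=; lra.
Qed.

Lemma det_B_ge k : `|\det (B 0)| * \prod_(j < k) ((1 - nu) * t j) <= `|\det (B k)|.
Proof.
elim: k => [|k IH]; first by rewrite big_ord0 mulr1.
rewrite det_BS big_ord_recr /= (mulrA `|\det (B 0)|) normrM; apply: ler_pM => //.
- by rewrite mulr_ge0 // prodr_ge0 // => j _; rewrite mulr_ge0 ?subr_ge0 ?ltW ?t_gt0.
- by rewrite mulr_ge0 ?subr_ge0 ?ltW ?t_gt0.
rewrite ger0_norm; last by apply/ltW/divr_gt0; rewrite ?mulr_gt0 ?t_gt0 ?sy_gt0 ?d_gt0.
rewrite ler_pdivlMr ?d_gt0 // mulrAC [in leRHS]mulrC ler_pM2r ?t_gt0 //; exact: curvature.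
Qed.

Lemma norm_x_nonincreasing : {homo (fun k => N (x k)) : i j / (i <= j)%N >-> j <= i}.
Proof.
apply/nonincreasing_seqP => k; apply: le_trans (norm_xS_le k) _.
by rewrite gerBl mulr_ge0 // ltW ?d_gt0.
Qed.

Lemma mxtrace_B_le e k : 0 < e -> e <= N (x k) ->
  \tr (B k) + \sum_(j < k) (t j * d j)^-1 <= \tr (B 0) + k%:R / e.
Proof.
move=> e_gt0 e_le; rewrite mxtrace_B lerD2l mulr_natl -[in X in _ <= X](card_ord k).
rewrite -sumr_const; apply: ler_sum => j _.
have e_le' i : (i <= k)%N -> e <= N (x i).
  by move=> ik; apply: le_trans e_le (norm_x_nonincreasing ik).
have ej := e_le' j (ltnW (ltn_ord j)); have ej1 := e_le' j.+1 (ltn_ord j).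
have r_gt0 : 0 < N (x j) + N (x j.+1) by apply: addr_gt0; apply: lt_le_trans e_gt0 _.
by rewrite ler_pdivrMr // ler_pdivlMl //; lra.
Qed.

Lemma sum_d_le k : \sum_(j < k) d j <= N (x 0) / mu.
Proof.
rewrite ler_pdivlMr // mulrC; apply: le_trans (mu_sum_d_le k) _.
by rewrite gerBl euclid_norm_ge0.
Qed.

Lemma det_B_ge_AGM k C D :
  \sum_(j < k) (t j * d j)^-1 <= C -> \sum_(j < k) d j <= D ->
  `|\det (B 0)| * ((1 - nu) * (k%:R ^+ 2 / (C * D))) ^+ k <= `|\det (B k)|.
Proof.
move=> sum_c sum_d; apply: le_trans (det_B_ge k).
have nu_le1 : 0 <= 1 - nu by rewrite subr_ge0 ltW.
rewrite big_split /= prodr_const card_ord exprMn ler_wpM2l // ler_wpM2l ?exprn_ge0 //.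
have -> : \prod_(j < k) t j = \prod_(j < k) ((t j * d j)^-1 * d j)^-1.
  by apply: eq_bigr => j _; field; rewrite !gt_eqF ?t_gt0 ?d_gt0.
have c_gt0 j : 0 < (t j * d j)^-1 by rewrite invr_gt0 mulr_gt0 ?t_gt0 ?d_gt0.
exact: AGM_prodr_inv c_gt0 d_gt0 sum_c sum_d.
Qed.

Lemma exists_norm_lt e : 0 < e -> exists k, N (x k) < e.
Proof.
move=> e_gt0; apply/not_existsP => large.
have e_le k : e <= N (x k) by rewrite leNgt; apply/negP; exact: large.
have B_posdef k : posdef (B k) := posdef_invmx (posdef_H k).
have detB0_gt0 : 0 < `|\det (B 0)|.
  by rewrite normr_gt0 -unitfE -unitmxE posdef_unitmx.
set A := \tr (B 0) + e^-1; set S := N (x 0) / mu.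
have A_gt0 : 0 < A by rewrite ltr_wpDl ?posdef_mxtrace_ge0 ?invr_gt0.
have S_gt0 : 0 < S by rewrite divr_gt0 // euclid_norm_gt0 x_neq0.
set a := (1 - nu) / (A * S); set C := n`!%:R * A ^+ n.
have a_gt0 : 0 < a by apply: divr_gt0; [rewrite subr_gt0 | exact: mulr_gt0].
near \oo => k.
have k_gt0 : (0 < k)%N by near: k; exists 1%N.
have trace_le : \tr (B k) + \sum_(j < k) (t j * d j)^-1 <= k%:R * A.
  apply: le_trans (mxtrace_B_le e_gt0 (e_le k)) _.
  by rewrite /A mulrDr lerD2r ler_peMl ?posdef_mxtrace_ge0 // ler1n.
have sum_c_ge0 : 0 <= \sum_(j < k) (t j * d j)^-1.
  by apply: sumr_ge0 => j _; rewrite invr_ge0 mulr_ge0 // ltW ?t_gt0 ?d_gt0.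
have tr_ge0 := posdef_mxtrace_ge0 (B_posdef k).
have lower : `|\det (B 0)| * (a * k%:R) ^+ k <= `|\det (B k)|.
  have -> : a * k%:R = (1 - nu) * (k%:R ^+ 2 / (k%:R * A * S)).
    by rewrite /a; field; rewrite !gt_eqF ?ltr0n.
  apply: det_B_ge_AGM (sum_d_le k); apply: le_trans _ trace_le; exact: ler_wpDl tr_ge0 (lexx _).
have upper : `|\det (B k)| <= C * k%:R ^+ n.
  apply: le_trans (posdef_det_le_mxtrace (B_posdef k)) _.
  rewrite /C -mulrA -exprMn ler_pM2l ?ltr0n ?fact_gt0 // lerXn2r ?nnegrE //; last lra.
  by rewrite mulr_ge0 ?ler0n ?ltW.
have : C / `|\det (B 0)| * k%:R ^+ n < (a * k%:R) ^+ k.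
  by near: k; exact: superexp_dominates_poly.
rewrite -(ltr_pM2l detB0_gt0) mulrA mulrCA divff ?gt_eqF // mulr1.
by move=> /lt_le_trans/(_ (le_trans lower upper)); rewrite ltxx.
Unshelve. all: by end_near.
Qed.

Lemma BFGS_euclid_norm_cvg0 : x @ \oo --> (0 : 'cV[R]_n).
Proof.
apply/cvgr0Pnorm_lt => e e_gt0; have [K xK_lt] := exists_norm_lt e_gt0.
near=> k; apply: le_lt_trans (mx_norm_le_euclid_norm _) _.
by apply: le_lt_trans xK_lt; apply: norm_x_nonincreasing; near: k; exists K.
Unshelve. all: by end_near.
Qed.

End BFGSEuclidNorm.

Unset Implicit Arguments.

Theorem corollary4p2 (R : realType) (n : nat) (x : nat -> 'cV[R]_n) :
  BFGS_sequence (@euclid_norm R n) x -> x @ \oo --> (0 : 'cV[R]_n).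
Proof.
case=> g [mu [nu [H0 [grad [mu_gt0 [_ [nu_lt1 [H0_posdef steps]]]]]]]].
have [t t_dir] := choice (fun k => (steps k).1).
apply: (@BFGS_euclid_norm_cvg0 R n x g mu nu H0 t) => // k.
- exact: (grad k).1.
- exact: (grad k).2.
- exact: (t_dir k).1.
- exact: (t_dir k).2.
- exact: (steps k).2.1.
- exact: (steps k).2.2.
Qed.
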